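(* Let $\mathcal{A}=(\Sigma,Q,I,F,\delta)$ be an NFA and let $\mathcal{A}_{\mathrm{SS}}$ be the DFA output by the subset construction with $\mathcal{A}$ as input. Then $|\mathcal{A}_{\mathrm{SS}}|\le\|\mathcal{A}\|$, where $$\|\mathcal{A}\|=\min_{\mathcal{J}\subseteq\Sigma}\left(1+\sum_{w\in\Sigma\setminus\mathcal{J}}\left|\mathcal{R}(T^{(w)})\right|\right)\left|\mathcal{M}(\mathcal{J})\right|.$$
   Context: An NFA is $\mathcal{A}=(\Sigma,Q,I,F,\delta)$ with finite alphabet $\Sigma$, finite state set $Q=\{q_1,\dots,q_n\}$, initial states $I$, accepting states $F$, transitions $\delta\subseteq Q\times\Sigma\times Q$ ($\varepsilon$-free). The Boolean semifield is $\mathbb{B}=(\{0,1\},\vee,\wedge,0,1)$. For $w\in\Sigma$ the transition matrix $T^{(w)}\in\mathbb{B}^{n\times n}$ has $T^{(w)}_{i,j}=1$ iff $(q_i,w,q_j)\in\delta$. The range $\mathcal{R}(T)$ of a Boolean matrix $T$ is $\{Tv:v\in\mathbb{B}^n\}$. For $\mathcal{J}\subseteq\Sigma$, $\mathcal{M}(\mathcal{J})$ is the monoid of $n\times n$ Boolean matrices generated by $\{T^{(w)}:w\in\mathcal{J}\}$ under Boolean matrix multiplication, containing the identity matrix. The subset construction produces the DFA $\mathcal{A}_{\mathrm{SS}}$ whose states are exactly the subsets $\mathcal{Q}\subseteq Q$ reachable from $\mathcal{Q}_I=I$ by repeatedly applying, for $w\in\Sigma$, the map $\mathcal{Q}\mapsto\{q':(q,w,q')\in\delta,\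 q\in\mathcal{Q}\}$ (including the empty set if reachable); $|\mathcal{A}_{\mathrm{SS}}|$ is its number of states. *)

From mathcomp Require Import all_boot.
From mathcomp Require Import boolp.

Set Implicit Arguments.
Unset Strict Implicit.
Unset Printing Implicit Defensive.

(* An n x n Boolean matrix T is encoded
   as the set of index pairs (i,j) with T_{i,j} = 1; a Boolean vector as the
   set of indices where it is 1. *)

Section NFA.
Variables (Sigma : finType) (n : nat).
Local Notation bmat := {set 'I_n * 'I_n}.
Local Notation bvec := {set 'I_n}.

Definition tmat (delta : {set 'I_n * Sigma * 'I_n}) (w : Sigma) : bmat :=
  [set p | (p.1, w, p.2) \in delta].

Definition bmul (A B : bmat) : bmat :=
  [set p | [exists k, ((p.1, k) \in A) && ((k, p.2) \in B)]].

Definition bid : bmat := [set p | p.1 == p.2].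

Definition bapp (T : bmat) (v : bvec) : bvec :=
  [set i | [exists j, ((i, j) \in T) && (j \in v)]].

Definition brange (T : bmat) : {set bvec} := [set bapp T v | v : bvec].

Definition wordmat (delta : {set 'I_n * Sigma * 'I_n}) (s : seq Sigma) : bmat :=
  foldr (fun w M => bmul (tmat delta w) M) bid s.

Definition gen_monoid (delta : {set 'I_n * Sigma * 'I_n}) (J : {set Sigma})
  : {set bmat} :=
  [set M | `[< exists s : seq Sigma, all (fun w => w \in J) s /\ M = wordmat delta s >]].

Definition ss_step (delta : {set 'I_n * Sigma * 'I_n}) (S : bvec) (w : Sigma)
  : bvec :=
  [set q' | [exists q in S, (q, w, q') \in delta]].

Definition ss_states (I : bvec) (delta : {set 'I_n * Sigma * 'I_n})
  : {set bvec} :=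
  [set S | `[< exists s : seq Sigma, S = foldl (ss_step delta) I s >]].

Definition norm_term (delta : {set 'I_n * Sigma * 'I_n}) (J : {set Sigma})
  : nat :=
  (1 + \sum_(w in ~: J) #|brange (tmat delta w)|) * #|gen_monoid delta J|.

Definition nfa_norm (delta : {set 'I_n * Sigma * 'I_n}) : nat :=
  \big[minn/norm_term delta set0]_(J : {set Sigma}) norm_term delta J.

End NFA.

From mathcomp Require Import all_boot.
From mathcomp Require Import boolp.

Set Implicit Arguments.
Unset Strict Implicit.
Unset Printing Implicit Defensive.

(* Fix J and cut a word after its last letter w outside J.  The subset then
   reached is the row vector v^T M, with M in M(J) and v either I or a
   successor set X' = X T^(w) (X a row vector).  That successor set is
   determined by c = T^(w) (not X') in R(T^(w)): it is the set of
   w-successors of (not c).  Hence at most (1 + sum_(w notin J) |R(T^(w))|)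
   |M(J)| subsets are reachable, whatever J is. *)

Lemma leq_card_bigcup (I T : finType) (P : {pred I}) (A : I -> {set T}) :
  #|\bigcup_(i in P) A i| <= \sum_(i in P) #|A i|.
Proof.
elim/big_ind2: _ => [|B b C c HB HC|//]; first by rewrite cards0.
by apply: leq_trans (leq_card_setU _ _) _; apply: leq_add.
Qed.

Section SubsetConstruction.
Variables (Sigma : finType) (n : nat) (delta : {set 'I_n * Sigma * 'I_n}).

Definition vmul (v : {set 'I_n}) (M : {set 'I_n * 'I_n}) : {set 'I_n} :=
  [set j | [exists i, (i \in v) && ((i, j) \in M)]].

Lemma vmul_wordmat v s : vmul v (wordmat delta s) = foldl (ss_step delta) v s.
Proof.
elim: s v => [|w s IH] v /=.
  apply/setP=> j; rewrite inE; apply/existsP/idP => [[i /andP[vi]]|vj].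
    by rewrite inE /= => /eqP <-.
  by exists j; rewrite vj inE /=.
rewrite -IH; apply/setP=> j; rewrite !inE.
apply/existsP/existsP => [[i /andP[vi]]|[k /andP[]]].
  rewrite inE => /existsP[k /andP[]]; rewrite inE => ik kj.
  by exists k; rewrite kj andbT inE; apply/existsP; exists i; rewrite vi.
rewrite inE => /existsP[i /andP[vi ik]] kj.
by exists i; rewrite vi inE; apply/existsP; exists k; rewrite inE ik.
Qed.

Lemma wordmat_gen_monoid (J : {set Sigma}) s :
  all (mem J) s -> wordmat delta s \in gen_monoid delta J.
Proof. by move=> sJ; rewrite inE; apply/asboolP; exists s. Qed.

(* The complement of c is the largest set all of whose w-successors lie in
   ss_step v w; it contains v. *)
Lemma ss_step_from_range v w :
  let c := bapp (tmat delta w) (~: ss_step delta v w) in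
  ss_step delta v w = ss_step delta (~: c) w.
Proof.
apply/setP=> q'; apply/idP/idP => [vq'|].
  move: (vq'); rewrite inE => /existsP[q /andP[vq qq']].
  rewrite inE; apply/existsP; exists q; rewrite qq' andbT !inE.
  apply/existsP => -[j /andP[]]; rewrite !inE /= => qj /negP; apply.
  by apply/existsP; exists q; rewrite vq.
rewrite inE => /existsP[q /andP[]]; rewrite !inE => /existsP q_out qq'.
by apply: contraT => q'_out; exfalso; apply: q_out; exists q'; rewrite !inE qq'.
Qed.

Definition restart_sets (J : {set Sigma}) (I : {set 'I_n}) : {set {set 'I_n}} :=
  I |: \bigcup_(w in ~: J) [set ss_step delta (~: c) w | c in brange (tmat delta w)].

Lemma card_restart_sets J I :
  #|restart_sets J I| <= 1 + \sum_(w in ~: J) #|brange (tmat delta w)|.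
Proof.
rewrite cardsU1; apply: leq_add; first by case: (_ \notin _).
by apply: leq_trans (leq_card_bigcup _ _) _; apply: leq_sum => w _; apply: leq_imset_card.
Qed.

Lemma ss_reach_restart J I s :
  exists2 v, v \in restart_sets J I &
  exists2 u, all (mem J) u & foldl (ss_step delta) I s = foldl (ss_step delta) v u.
Proof.
elim/last_ind: s => [|s w [v v_restart [u uJ reach_s]]].
  by exists I; [rewrite setU11 | exists [::]].
rewrite foldl_rcons reach_s.
have [wJ|wNJ] := boolP (w \in J).
  by exists v => //; exists (rcons u w); rewrite ?foldl_rcons // all_rcons uJ andbT.
set S := foldl _ v u.
exists (ss_step delta S w); last by exists [::].
rewrite ss_step_from_range !inE; apply/orP; right; apply/bigcupP; exists w; first by rewrite inE.
by apply: imset_f; apply: imset_f.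
Qed.

Lemma card_ss_states_le_norm_term J I : #|ss_states I delta| <= norm_term delta J.
Proof.
pose cover := [set vmul p.1 p.2 | p in setX (restart_sets J I) (gen_monoid delta J)].
have reach_cover : ss_states I delta \subset cover.
  apply/subsetP => S; rewrite inE => /asboolP[s ->].
  have [v v_restart [u uJ ->]] := ss_reach_restart J I s.
  rewrite -vmul_wordmat; apply/imsetP; exists (v, wordmat delta u) => //.
  by rewrite inE /= v_restart wordmat_gen_monoid.
apply: leq_trans (subset_leq_card reach_cover) _.
apply: leq_trans (leq_imset_card _ _) _.
by rewrite cardsX leq_mul2r card_restart_sets orbT.
Qed.

End SubsetConstruction.

Theorem theorem3 (Sigma : finType) (n : nat)
  (I F : {set 'I_n}) (delta : {set 'I_n * Sigma * 'I_n}) :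
  #|ss_states I delta| <= nfa_norm delta.
Proof.
have bound J : #|ss_states I delta| <= norm_term delta J.
  exact: card_ss_states_le_norm_term.
rewrite /nfa_norm; elim/big_ind: _ => [|x y le_x le_y|J _]; rewrite ?bound //.
by rewrite leq_min le_x le_y.
Qed.
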